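(* Let $n\ge 1$, $d\ge 2$, $1\le k\le n$ be integers and $R=n-k\lfloor n/k\rfloor$. For every $k$-separable state $\rho$ on $(\mathbb{C}^d)^{\otimes n}$, $$\|\tau(\rho)\|\le\sqrt{\big(d^{\lceil n/k\rceil}-1\big)^{R}\big(d^{\lfloor n/k\rfloor}-1\big)^{k-R}}.$$
   Context: Consider $n$ qudits with Hilbert space $(\mathbb{C}^d)^{\otimes n}$. Let $\lambda_0=\mathbb{1}_d$ and let $\lambda_1,\dots,\lambda_{d^2-1}$ be Hermitian traceless $d\times d$ matrices normalized so that $\mathrm{Tr}[\lambda_i\lambda_j]=d\,\delta_{ij}$. The full-body correlation tensor norm of a state $\rho$ is $\|\tau(\rho)\|=\big(\sum_{i_1,\dots,i_n=1}^{d^2-1}(\mathrm{Tr}[\rho\,\lambda_{i_1}\otimes\cdots\otimes\lambda_{i_n}])^2\big)^{1/2}$. A pure state is $k$-separable if it is a tensor product of $k$ pure states on the blocks of some partition of $\{1,\dots,n\}$ into $k$ nonempty blocks; a state is $k$-separable if it is a convex combination of $k$-separable pure states (partitions may differ between terms). *)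

(* Complex scalars: an arbitrary numClosedFieldType C
   (e.g. algC, or complex R for a real closed / real field R). *)
From HB Require Import structures.
From mathcomp Require Import all_boot all_order all_algebra.
Set Implicit Arguments.
Unset Strict Implicit.
Unset Printing Implicit Defensive.
Import Order.TTheory GRing.Theory Num.Theory.
Local Open Scope ring_scope.

Section QuditDefs.
Variable C : numClosedFieldType.

(* Computational basis of (C^d)^{\otimes n}: configurations x : 'I_n -> 'I_d. *)
Definition config (n d : nat) := {ffun 'I_n -> 'I_d}.

(* Operators on (C^d)^{\otimes n}, given by their matrix entries
   in the computational basis. *)
Definition qop (n d : nat) := config n d -> config n d -> C.

Definition tensop (n d : nat) (A : 'I_n -> 'M[C]_d) : qop n d :=
  fun x y => \prod_(j < n) A j (x j) (y j).

Definition trprod (n d : nat) (rho M : qop n d) : C :=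
  \sum_(x : config n d) \sum_(y : config n d) rho x y * M y x.

(* Hermitian, traceless, Tr[l_i l_j] = d delta_ij (indices 1..d^2-1 are
   represented 0-based by 'I_(d^2-1)). *)
Definition gellmann_basis (d : nat) (lam : 'I_(d ^ 2 - 1) -> 'M[C]_d) : Prop :=
  [/\ forall i a b, lam i b a = (lam i a b)^*,
      forall i, \tr (lam i) = 0
    & forall i j, \tr (lam i *m lam j) = d%:R * (i == j)%:R].

Definition tau_norm (n d : nat) (lam : 'I_(d ^ 2 - 1) -> 'M[C]_d)
    (rho : qop n d) : C :=
  sqrtC (\sum_(idx : {ffun 'I_n -> 'I_(d ^ 2 - 1)})
           (trprod rho (tensop (fun j => lam (idx j)))) ^+ 2).

(* psi is (up to the canonical identification) a tensor product of vectors
   on the k blocks of a partition P of {0..n-1}: psi x = prod_B phi_B (x|_B). *)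
Definition k_product_vector (n d k : nat) (psi : config n d -> C) : Prop :=
  exists P : {set {set 'I_n}},
    [/\ partition P [set: 'I_n], #|P| = k &
      exists phi : {set 'I_n} -> config n d -> C,
        (forall B, B \in P -> forall x y : config n d,
            (forall i, i \in B -> x i = y i) -> phi B x = phi B y)
        /\ (forall x, psi x = \prod_(B in P) phi B x)].

Definition k_sep_pure (n d k : nat) (sigma : qop n d) : Prop :=
  exists psi : config n d -> C,
    [/\ \sum_(x : config n d) `|psi x| ^+ 2 = 1,
        k_product_vector k psi
      & forall x y, sigma x y = psi x * (psi y)^*].

Definition k_separable (n d k : nat) (rho : qop n d) : Prop :=
  exists (m : nat) (p : 'I_m -> C) (sigma : 'I_m -> qop n d),
    [/\ forall i, 0 <= p i,
        \sum_(i < m) p i = 1,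
        forall i, k_sep_pure k (sigma i)
      & forall x y, rho x y = \sum_(i < m) p i * sigma i x y].

End QuditDefs.

Definition ceil_div (n k : nat) : nat := (n + k.-1) %/ k.

From HB Require Import structures.
From mathcomp Require Import all_boot all_order all_algebra.
From mathcomp Require Import zify ring.
Set Implicit Arguments.
Unset Strict Implicit.
Unset Printing Implicit Defensive.
Import Order.TTheory GRing.Theory Num.Theory.

(* A k-separable state is a mixture of pure product states |psi> = (x)_B |phi_B> over
   partitions into k blocks, and the squared norm of the correlation tensor is convex,
   so it suffices to treat such pure states. For them the full-body correlation tensor
   factorises over the blocks, T_e = prod_B t_B(e), hence ||T||^2 = prod_B ||t_B||^2.
   Within a block, the tensor products of the lam's are orthogonal to each other and to
   the identity, and Bessel's inequality for |phi_B><phi_B| against this orthogonal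
   family gives ||t_B||^2 <= (d^|B| - 1) ||phi_B||^4: a pure state has squared
   Hilbert-Schmidt norm ||phi_B||^4 and its identity component carries d^-|B| of it. The
   ratios (d^(x+1) - 1) / (d^x - 1) decrease, so the product of the d^|B| - 1 over block
   sizes adding up to n is largest for the balanced partition. *)

Lemma leq_eq_trans a b c e : c <= e -> a = c -> b = e -> a <= b.
Proof. by move=> h -> ->. Qed.

Section BalancedProduct.
Variable d : nat.
Hypothesis d_gt1 : 1 < d.

Let f x := d ^ x - 1.

Lemma subn1_expn_ratio_mono a b : a <= b -> f a * f b.+1 <= f a.+1 * f b.
Proof.
move=> le_ab; rewrite /f !expnS.
have : 1 <= d ^ a <= d ^ b by rewrite expn_gt0 leq_pexp2l; lia.
move: (d ^ a) (d ^ b) => A B; nia.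
Qed.

Variable q : nat.
Let u := f q.
Let v := f q.+1.

Lemma subn1_expn_above m : f (q + m) * u ^ m <= u * v ^ m.
Proof.
elim: m => [|m IHm]; first by rewrite addn0 !expn0 !muln1.
have step : f (q + m).+1 * u <= v * f (q + m).
  by rewrite mulnC; apply: subn1_expn_ratio_mono; lia.
rewrite addnS expnS mulnA (leq_trans (leq_mul step (leqnn _))) //.
by rewrite -mulnA expnS [u * (v * _)]mulnCA leq_mul2l IHm orbT.
Qed.

Lemma subn1_expn_below m : m <= q -> f (q - m) * v ^ m <= u ^ m.+1.
Proof.
elim: m => [|m IHm] le_mq; first by rewrite subn0 expn0 muln1 expn1.
have step : f (q - m.+1) * v <= f (q - m) * u.
  have -> : q - m = (q - m.+1).+1 by lia.
  exact: subn1_expn_ratio_mono (leq_subr _ _).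
rewrite expnS mulnA (leq_trans (leq_mul step (leqnn _))) //.
by rewrite mulnAC [u ^ _.+1]expnS [u * _]mulnC leq_mul2r IHm ?orbT //; lia.
Qed.

(* In multiplicative form: f b <= u * (v / u) ^ (b - q) for every b, because the
   successive ratios of f decrease. *)
Lemma subn1_expn_tangent b : f b * u ^ b * v ^ q <= u ^ q.+1 * v ^ b.
Proof.
have [le_qb | lt_bq] := leqP q b.
  have := subn1_expn_above (b - q); rewrite subnKC // => h.
  rewrite -[in u ^ b](subnK le_qb) -[in v ^ b](subnK le_qb) !expnD expnS.
  by apply: leq_eq_trans (leq_mul h (leqnn (u ^ q * v ^ q))) _ _; clearbody f u v; ring.
have le_bq := ltnW lt_bq.
have := subn1_expn_below (leq_subr b q); rewrite subKn // => h.
rewrite -[in v ^ q](subnK le_bq) -[q.+1](subnK (leqW le_bq)) subSn // !expnD.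
by apply: leq_eq_trans (leq_mul h (leqnn (u ^ b * v ^ b))) _ _; clearbody f u v; ring.
Qed.

Lemma prod_subn1_expn_tangent (s : seq nat) :
  \prod_(b <- s) f b * u ^ sumn s * v ^ (q * size s)
  <= u ^ (q.+1 * size s) * v ^ sumn s.
Proof.
elim: s => [|b s IHs]; first by rewrite big_nil /= !muln0.
rewrite big_cons /= (mulnS q) (mulnS q.+1).
rewrite (expnD u q.+1) (expnD v q) (expnD u b) (expnD v b).
by apply: leq_eq_trans (leq_mul (subn1_expn_tangent b) IHs) _ _; clearbody f u v; ring.
Qed.

End BalancedProduct.

Lemma prod_subn1_expn_balanced d n k (s : seq nat) :
  1 < d -> sumn s = n -> size s = k -> 0 < k <= n ->
  \prod_(b <- s) (d ^ b - 1)
  <= (d ^ ceil_div n k - 1) ^ (n %% k) * (d ^ (n %/ k) - 1) ^ (k - n %% k).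
Proof.
move=> d_gt1 sum_s size_s /andP[k_gt0 le_kn].
set q := n %/ k; set R := n %% k.
set u := d ^ q - 1; set v := d ^ q.+1 - 1.
have q_gt0 : 0 < q by rewrite divn_gt0.
have u_gt0 : 0 < u by rewrite subn_gt0 -{1}(expn0 d) ltn_exp2l.
have v_gt0 : 0 < v by rewrite subn_gt0 -{1}(expn0 d) ltn_exp2l.
have n_eq : n = q * k + R by rewrite /q /R -divn_eq.
have lt_Rk : R < k by rewrite ltn_pmod.
have -> : (d ^ ceil_div n k - 1) ^ R = v ^ R.
  have [-> | R_gt0] := posnP R; first by rewrite !expn0.
  congr ((d ^ _ - 1) ^ _); rewrite /ceil_div.
  have -> : n + k.-1 = q.+1 * k + R.-1 by rewrite n_eq mulSn; lia.
  by rewrite divnMDl ?divn_small ?addn0 //; lia.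
have := prod_subn1_expn_tangent d_gt1 q s; rewrite sum_s size_s -/u -/v.
have -> : q.+1 * k = q * k + R + (k - R) by rewrite mulSn; lia.
rewrite n_eq !expnD => H.
have pos : 0 < u ^ (q * k) * u ^ R * v ^ (q * k) by rewrite !muln_gt0 !expn_gt0 u_gt0 v_gt0.
rewrite -(leq_pmul2r pos); apply: leq_eq_trans H _ _; ring.
Qed.

Local Open Scope ring_scope.

Section LocalSums.
Variables (R : numFieldType) (n : nat) (D : finType).
Implicit Types (A : {set 'I_n}) (x y : {ffun 'I_n -> D}) (f g : {ffun 'I_n -> D} -> R).

Definition local_on (T : Type) A (f : {ffun 'I_n -> D} -> T) :=
  forall x y, (forall i, i \in A -> x i = y i) -> f x = f y.

Definition splice A x y : {ffun 'I_n -> D} := [ffun i => if i \in A then x i else y i].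

(* Exchanging the A-coordinates of x and y is an involution on pairs that turns
   f x * g y into f x * g x. *)
Lemma sum_mul_local A A' f g :
  [disjoint A & A'] -> local_on A f -> local_on A' g ->
  (\sum_x f x) * (\sum_x g x) = (\sum_x f x * g x) * (#|D| ^ n)%:R.
Proof.
move=> AA' fA gA'.
rewrite [LHS]mulr_suml; under eq_bigr do rewrite mulr_sumr.
rewrite pair_bigA /=.
pose h p := (splice A p.1 p.2, splice A p.2 p.1).
have hK : involutive h.
  by case=> x y; congr (_, _); apply/ffunP=> i; rewrite !ffunE; case: (i \in A).
rewrite (reindex_inj (inv_inj hK)) /=.
have -> : \sum_(p : {ffun 'I_n -> D} * {ffun 'I_n -> D}) f (h p).1 * g (h p).2 =
          \sum_(p : {ffun 'I_n -> D} * {ffun 'I_n -> D}) f p.1 * g p.1.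
  apply: eq_bigr => -[x y] _; congr (_ * _).
    by apply: fA => i iA; rewrite ffunE iA.
  by apply: gA' => i iA'; rewrite ffunE (disjointFl AA' iA').
rewrite -(pair_bigA _ (fun x _ => f x * g x)) mulr_suml /=.
by apply: eq_bigr => x _; rewrite sumr_const card_ffun card_ord mulr_natr.
Qed.

(* For f local on A, each value of f is taken #|D| ^ #|~: A| times on the full
   configuration space, so local_sum A f is the sum of f over the coordinates in A
   alone. *)
Definition local_sum A f : R :=
  (\sum_x f x) / (#|D| ^ #|~: A|)%:R.

Lemma eq_local_sum A f g : f =1 g -> local_sum A f = local_sum A g.
Proof. by move=> fg; rewrite /local_sum (eq_bigr _ (fun x _ => fg x)). Qed.

Lemma local_sumT f : local_sum [set: 'I_n] f = \sum_x f x.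
Proof. by rewrite /local_sum setCT cards0 expn0 divr1. Qed.

Hypothesis D_gt0 : (0 < #|D|)%N.

Lemma local_sum_expn_neq0 k : (#|D| ^ k)%:R != 0 :> R.
Proof. by rewrite pnatr_eq0 -lt0n expn_gt0 D_gt0. Qed.

Lemma sum_local_sum A f : \sum_x f x = local_sum A f * (#|D| ^ #|~: A|)%:R.
Proof. by rewrite /local_sum divfK ?local_sum_expn_neq0. Qed.

Lemma local_sum_ge0 A f : (forall x, 0 <= f x) -> 0 <= local_sum A f.
Proof. by move=> f_ge0; rewrite divr_ge0 ?ler0n // sumr_ge0. Qed.

Lemma local_sum_mul A A' f g :
  [disjoint A & A'] -> local_on A f -> local_on A' g ->
  local_sum A f * local_sum A' g = local_sum (A :|: A') (fun x => f x * g x).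
Proof.
move=> AA' fA gA'.
have cardU : #|A :|: A'| = (#|A| + #|A'|)%N.
  by rewrite cardsU (disjoint_setI0 AA') cards0 subn0.
have cardC (X : {set 'I_n}) : (#|X| + #|~: X|)%N = n by rewrite cardsC card_ord.
have := cardC A; have := cardC A'; have := cardC (A :|: A'); rewrite cardU => cU cA' cA.
have expE : (#|D| ^ #|~: A| * #|D| ^ #|~: A'| = #|D| ^ n * #|D| ^ #|~: (A :|: A')|)%N.
  by rewrite -!expnD; congr expn; lia.
rewrite /local_sum mulrACA -invfM (sum_mul_local AA' fA gA') -mulrA -natrM expE.
by rewrite natrM invfM mulVKf ?local_sum_expn_neq0.
Qed.

Lemma local_sum_big (s : seq {set 'I_n}) (g : {set 'I_n} -> {ffun 'I_n -> D} -> R) :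
  uniq s -> {in s &, forall B B' : {set 'I_n}, B != B' -> [disjoint B & B']} ->
  (forall B, B \in s -> local_on B (g B)) ->
  \prod_(B <- s) local_sum B (g B) =
  local_sum (\bigcup_(B <- s) B) (fun x => \prod_(B <- s) g B x).
Proof.
elim: s => [|B s IHs] /=.
  move=> _ _ _; rewrite big_nil /local_sum big_nil setC0 cardsT card_ord.
  under eq_bigr do rewrite big_nil.
  by rewrite sumr_const card_ffun card_ord divff ?local_sum_expn_neq0.
move=> /andP[Bs s_uniq] disj loc.
have locB : local_on B (g B) by apply: loc; rewrite mem_head.
have disj_s : {in s &, forall B1 B2 : {set 'I_n}, B1 != B2 -> [disjoint B1 & B2]}.
  by move=> B1 B2 B1s B2s; apply: disj; rewrite inE ?B1s ?B2s orbT.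
have loc_s B' : B' \in s -> local_on B' (g B') by move=> B's; apply: loc; rewrite inE B's orbT.
have loc_prod : local_on (\bigcup_(B' <- s) B') (fun x => \prod_(B' <- s) g B' x).
  move=> x y xy; rewrite big_seq_cond [RHS]big_seq_cond; apply: eq_bigr => B' /andP[B's _].
  apply: (loc_s B' B's) => i iB'; apply: xy.
  by rewrite bigcup_seq; apply/bigcupP; exists B'.
have disjB : [disjoint B & \bigcup_(B' <- s) B'].
  rewrite bigcup_seq; apply: bigcup_disjoint => B' B's.
  by apply: disj; rewrite ?mem_head ?inE ?B's ?orbT //; apply: contraNneq Bs => ->.
rewrite !big_cons IHs // (local_sum_mul disjB locB loc_prod).
by apply: eq_local_sum => x; rewrite big_cons.
Qed.

Lemma local_sum_partition (P : {set {set 'I_n}}) (g : {set 'I_n} -> {ffun 'I_n -> D} -> R) :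
  partition P [set: 'I_n] -> (forall B, B \in P -> local_on B (g B)) ->
  \prod_(B in P) local_sum B (g B) = \sum_x \prod_(B in P) g B x.
Proof.
move=> partP loc; move: (partP) => /and3P[/eqP coverP /trivIsetP disj _].
rewrite -big_enum local_sum_big ?enum_uniq //; first last.
- by move=> B; rewrite mem_enum; apply: loc.
- by move=> B B'; rewrite !mem_enum; apply: disj.
have -> : \bigcup_(B <- enum P) B = [set: 'I_n] by rewrite big_enum.
by rewrite local_sumT; apply: eq_bigr => x _; rewrite big_enum.
Qed.

Lemma prod_if_in A (a : 'I_n -> R) (c : R) :
  \prod_j (if j \in A then a j else c) = \prod_(j in A) a j * c ^+ #|~: A|.
Proof.
rewrite (bigID (mem A)) /=; congr (_ * _).
  by apply: eq_bigr => j ->.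
rewrite -(prodr_const (mem (~: A))) /=; apply: eq_big => [j|j]; first by rewrite inE.
by move=> /negbTE ->.
Qed.

Lemma local_sum_prod_coord A (G : 'I_n -> D -> R) :
  local_sum A (fun x => \prod_(j in A) G j (x j)) = \prod_(j in A) \sum_a G j a.
Proof.
rewrite /local_sum (eq_bigr _ (fun x _ => big_mkcond _ _)) /=.
rewrite -(bigA_distr_bigA (fun j a => if j \in A then G j a else 1)).
have sum_if j : \sum_a (if j \in A then G j a else 1) =
                if j \in A then \sum_a G j a else #|D|%:R.
  by case: (j \in A); rewrite // sumr_const.
rewrite (eq_bigr _ (fun j _ => sum_if j)) prod_if_in -natrX.
by rewrite mulfK ?local_sum_expn_neq0.
Qed.

Lemma local_sum_mulr A f c : local_sum A (fun x => f x * c) = local_sum A f * c.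
Proof. by rewrite /local_sum -mulr_suml mulrAC. Qed.

Lemma local_sum_delta A x f : local_on A f ->
  local_sum A (fun y => \prod_(j in A) (x j == y j)%:R * f y) = f x.
Proof.
move=> fA.
have -> : local_sum A (fun y => \prod_(j in A) (x j == y j)%:R * f y) =
          local_sum A (fun y => \prod_(j in A) (x j == y j)%:R * f x).
  apply: eq_local_sum => y.
  have [agree | /forall_inPn[j jA xy_j]] := boolP [forall j in A, x j == y j].
    by rewrite (fA y x) // => i iA; move/forall_inP: agree => /(_ i iA) /eqP.
  by rewrite (bigD1 j) //= (negbTE xy_j) !mul0r.
rewrite local_sum_mulr (local_sum_prod_coord A (fun j a => (x j == a)%:R)).
rewrite big1 ?mul1r // => j _.
rewrite (bigD1 (x j)) //= eqxx big1 ?addr0 // => a /negbTE.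
by rewrite eq_sym => ->.
Qed.

End LocalSums.

Section HermitianDot.
Variables (C : numClosedFieldType) (X : finType).
Implicit Types (F G H : X -> C).

Definition dot F G := \sum_x (F x)^* * G x.

Lemma dotC F G : dot F G = (dot G F)^*.
Proof.
rewrite /dot rmorph_sum; apply: eq_bigr => x _.
by rewrite rmorphM /= conjCK mulrC.
Qed.

Lemma dot_ge0 F : 0 <= dot F F.
Proof. by apply: sumr_ge0 => x _; rewrite mulrC mul_conjC_ge0. Qed.

Lemma dot_suml (I : finType) (a : I -> C) (F : I -> X -> C) H :
  dot (fun x => \sum_i a i * F i x) H = \sum_i (a i)^* * dot (F i) H.
Proof.
rewrite /dot; under eq_bigr do rewrite rmorph_sum mulr_suml.
rewrite exchange_big; apply: eq_bigr => i _; rewrite mulr_sumr.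
by apply: eq_bigr => x _; rewrite rmorphM mulrA.
Qed.

Lemma dot_sumr (I : finType) (a : I -> C) (F : I -> X -> C) H :
  dot H (fun x => \sum_i a i * F i x) = \sum_i a i * dot H (F i).
Proof.
rewrite /dot; under eq_bigr do rewrite mulr_sumr.
rewrite exchange_big; apply: eq_bigr => i _; rewrite mulr_sumr.
by apply: eq_bigr => x _; rewrite mulrCA.
Qed.

Lemma dot_bessel (M u w : X -> C) (K s c : C) :
  0 < K -> 0 < c -> 0 <= s ->
  dot u M = s -> dot u u = K * s -> dot u w = 0 -> dot w w = c ->
  s <= K * (dot M M - `|dot w M| ^+ 2 / c).
Proof.
move=> K_gt0 c_gt0 s_ge0 uM uu uw ww.
set a := dot w M.
(* Expand 0 <= dot v v for v = M - u / K - (a / c) w. *)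
have realK : K^* = K by rewrite geC0_conj ?ltW.
have realc : c^* = c by rewrite geC0_conj ?ltW.
have reals : s^* = s by rewrite geC0_conj.
pose al := K^-1; pose be := a / c.
have := dot_ge0 (fun x => M x - al * u x - be * w x).
have -> : dot (fun x => M x - al * u x - be * w x) (fun x => M x - al * u x - be * w x) =
  dot M M - al^* * dot u M - be^* * dot w M - al * dot M u + al^* * al * dot u u
  + be^* * al * dot w u - be * dot M w + al^* * be * dot u w + be^* * be * dot w w.
  rewrite /dot !mulr_sumr -!(sumrB, big_split) /=; apply: eq_bigr => x _.
  by rewrite !rmorphB !rmorphM /=; ring.
rewrite (dotC M u) (dotC w u) (dotC M w) uM uu uw ww reals rmorph0 -/a.
rewrite /al /be !rmorphM /= !fmorphV /= realK realc normCK.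
have K_neq0 : K != 0 by rewrite gt_eqF.
have c_neq0 : c != 0 by rewrite gt_eqF.
have -> : dot M M - K^-1 * s - a^* / c * a - K^-1 * s + K^-1 * K^-1 * (K * s)
  + a^* / c * K^-1 * 0 - a / c * a^* + K^-1 * (a / c) * 0 + a^* / c * (a / c) * c
  = K^-1 * (K * (dot M M - a * a^* / c) - s) by field; rewrite K_neq0 c_neq0.
by rewrite pmulr_rge0 ?invr_gt0 // subr_ge0.
Qed.

End HermitianDot.

Section PairConfigurations.
Variables (n : nat) (D1 D2 : finType).

Definition cfg_fst (z : {ffun 'I_n -> D1 * D2}) : {ffun 'I_n -> D1} := [ffun i => (z i).1].
Definition cfg_snd (z : {ffun 'I_n -> D1 * D2}) : {ffun 'I_n -> D2} := [ffun i => (z i).2].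

Lemma sum_pair_cfg (R : nmodType) (F : {ffun 'I_n -> D1} -> {ffun 'I_n -> D2} -> R) :
  \sum_x \sum_y F x y = \sum_z F (cfg_fst z) (cfg_snd z).
Proof.
rewrite pair_bigA (reindex (fun z => (cfg_fst z, cfg_snd z))) //=.
exists (fun p : {ffun 'I_n -> D1} * {ffun 'I_n -> D2} => [ffun i => (p.1 i, p.2 i)]).
  by move=> z _; apply/ffunP => i; rewrite !ffunE; case: (z i).
by move=> [x y] _; congr (_, _); apply/ffunP => i; rewrite !ffunE.
Qed.

End PairConfigurations.

Section BlockCorrelation.
Variables (C : numClosedFieldType) (n d : nat) (lam : 'I_(d ^ 2 - 1) -> 'M[C]_d).
Hypothesis lam_basis : gellmann_basis lam.
Hypothesis d_gt1 : (1 < d)%N.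
Variables (B : {set 'I_n}) (phi : config n d -> C).
Hypothesis phi_local : local_on B phi.

Local Notation pcfg := {ffun 'I_n -> 'I_d * 'I_d}.
Local Notation index := {ffun 'I_n -> 'I_(d ^ 2 - 1)}.

(* A factor phi of a product vector is a function on full configurations that only
   depends on the coordinates in B, and an operator is given by its entries at the pairs
   z = (x, y) of configurations; local sums over B then stand for sums over the block.
   block_corr e is <phi| (x)_(j in B) lam (e j) |phi>. *)
Definition lam_block (e : index) (z : pcfg) : C := \prod_(j in B) lam (e j) (z j).1 (z j).2.
Definition id_block (z : pcfg) : C := \prod_(j in B) ((z j).1 == (z j).2)%:R.
Definition proj_entry (z : pcfg) : C := phi (cfg_fst z) * (phi (cfg_snd z))^*.

Definition block_corr (e : index) : C :=
  local_sum B (fun z => (lam_block e z)^* * proj_entry z).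
Definition block_norm : C := local_sum B (fun x => `|phi x| ^+ 2).

Let cp : C := (#|{: 'I_d * 'I_d}| ^ #|~: B|)%:R.
Let c1 : C := (#|'I_d| ^ #|~: B|)%:R.

Lemma digits_gt0 : (0 < #|'I_d|)%N.
Proof. by rewrite card_ord; lia. Qed.

Lemma pairs_gt0 : (0 < #|{: 'I_d * 'I_d}|)%N.
Proof. by rewrite card_prod muln_gt0 digits_gt0. Qed.

Lemma indices_gt0 : (0 < #|'I_(d ^ 2 - 1)|)%N.
Proof. by rewrite card_ord subn_gt0 (ltn_trans d_gt1) // -{1}[d]expn1 ltn_exp2l. Qed.

Lemma cp_sqr : cp = c1 * c1.
Proof. by rewrite /cp /c1 -natrM -expnMn card_prod. Qed.

Lemma lam_adj i a b : lam i b a = (lam i a b)^*.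
Proof. by case: lam_basis. Qed.

Lemma sum_pair_entry (F : 'I_d -> 'I_d -> C) :
  \sum_(p : 'I_d * 'I_d) F p.1 p.2 = \sum_a \sum_b F a b.
Proof. by rewrite pair_big. Qed.

Lemma dot_lam_block e e' :
  dot (lam_block e) (lam_block e') = cp * (d%:R ^+ #|B| * \prod_(j in B) (e j == e' j)%:R).
Proof.
rewrite /dot (sum_local_sum pairs_gt0 B) mulrC; congr (_ * _).
under eq_local_sum => z do rewrite /lam_block rmorph_prod -big_split /=.
rewrite (local_sum_prod_coord pairs_gt0 _ (fun j p => (lam (e j) p.1 p.2)^* * lam (e' j) p.1 p.2)).
rewrite -prodr_const -big_split /=; apply: eq_bigr => j _.
case: lam_basis => _ _ orth.
rewrite (sum_pair_entry (fun a b => (lam (e j) a b)^* * lam (e' j) a b)).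
rewrite exchange_big -orth /mxtrace; apply: eq_bigr => b _.
by rewrite mxE; apply: eq_bigr => a _; rewrite -lam_adj.
Qed.

Lemma sum_diag (F : 'I_d -> 'I_d -> C) :
  \sum_(p : 'I_d * 'I_d) (p.1 == p.2)%:R * F p.1 p.2 = \sum_a F a a.
Proof.
rewrite (sum_pair_entry (fun a b => (a == b)%:R * F a b)); apply: eq_bigr => a _.
rewrite (bigD1 a) //= eqxx mul1r big1 ?addr0 // => b /negbTE.
by rewrite eq_sym => ->; rewrite mul0r.
Qed.

Lemma conj_id_block z : (id_block z)^* = id_block z.
Proof. by rewrite rmorph_prod; apply: eq_bigr => j _ /=; rewrite conjC_nat. Qed.

Lemma dot_id_lam_block e : B != set0 -> dot id_block (lam_block e) = 0.
Proof.
case/set0Pn => j0 j0B.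
rewrite /dot (sum_local_sum pairs_gt0 B).
under eq_local_sum => z do rewrite conj_id_block -big_split /=.
rewrite (local_sum_prod_coord pairs_gt0 _ (fun j p => (p.1 == p.2)%:R * lam (e j) p.1 p.2)).
rewrite (bigD1 j0) //= sum_diag.
by case: lam_basis => _ trace0 _; rewrite -/(mxtrace _) trace0 !mul0r.
Qed.

Lemma dot_id_block : dot id_block id_block = cp * d%:R ^+ #|B|.
Proof.
rewrite /dot (sum_local_sum pairs_gt0 B) mulrC; congr (_ * _).
under eq_local_sum => z do rewrite conj_id_block -big_split /=.
rewrite (local_sum_prod_coord pairs_gt0 _ (fun j p => (p.1 == p.2)%:R * (p.1 == p.2)%:R)).
rewrite -prodr_const; apply: eq_bigr => j _.
rewrite (sum_diag (fun a b => (a == b)%:R)).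
by under eq_bigr do rewrite eqxx; rewrite sumr_const card_ord.
Qed.

Lemma dot_lam_block_proj e : dot (lam_block e) proj_entry = cp * block_corr e.
Proof. by rewrite /dot (sum_local_sum pairs_gt0 B) mulrC. Qed.

Lemma sum_norm_phi : \sum_x `|phi x| ^+ 2 = c1 * block_norm.
Proof. by rewrite (sum_local_sum digits_gt0 B) mulrC. Qed.

Lemma dot_id_proj : dot id_block proj_entry = cp * block_norm.
Proof.
pose G (x y : config n d) := \prod_(j in B) (x j == y j)%:R * (phi x * (phi y)^*).
rewrite /dot (eq_bigr (fun z => G (cfg_fst z) (cfg_snd z))); last first.
  by move=> z _; rewrite conj_id_block /id_block /proj_entry /G; congr (_ * _);
     apply: eq_bigr => j _; rewrite !ffunE.
rewrite -(sum_pair_cfg G) cp_sqr -mulrA -sum_norm_phi mulr_sumr.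
apply: eq_bigr => x _.
have phi_conj_local : local_on B (fun y => (phi y)^*).
  by move=> y y' yy'; rewrite (phi_local yy').
rewrite /G; under eq_bigr do rewrite mulrCA.
rewrite -mulr_sumr (sum_local_sum digits_gt0 B).
rewrite (local_sum_delta digits_gt0 x phi_conj_local).
by rewrite normCK; ring.
Qed.

Lemma dot_proj : dot proj_entry proj_entry = cp * block_norm ^+ 2.
Proof.
pose G (x y : config n d) := `|phi x| ^+ 2 * `|phi y| ^+ 2.
rewrite /dot (eq_bigr (fun z => G (cfg_fst z) (cfg_snd z))); last first.
  by move=> z _; rewrite /proj_entry /G !normCK rmorphM /= conjCK; ring.
rewrite -(sum_pair_cfg G) /G.
under eq_bigr do rewrite -mulr_sumr.
by rewrite -mulr_suml sum_norm_phi cp_sqr; ring.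
Qed.

Lemma corr_term_local e :
  local_on B (fun z : pcfg => (lam_block e z)^* * proj_entry z).
Proof.
move=> z z' zz'; rewrite /proj_entry.
have -> : phi (cfg_fst z) = phi (cfg_fst z') by apply: phi_local => i iB; rewrite !ffunE zz'.
have -> : phi (cfg_snd z) = phi (cfg_snd z') by apply: phi_local => i iB; rewrite !ffunE zz'.
by congr (_^* * _); apply: eq_bigr => j jB; rewrite zz'.
Qed.

Lemma block_corr_local : local_on B block_corr.
Proof.
move=> e e' ee'; apply: eq_local_sum => z; congr (_^* * _).
by apply: eq_bigr => j jB; rewrite ee'.
Qed.

Let ce : C := (#|'I_(d ^ 2 - 1)| ^ #|~: B|)%:R.

Let ce_neq0 : ce != 0.
Proof. exact: (local_sum_expn_neq0 C indices_gt0). Qed.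

Definition block_corr_sq : C := local_sum B (fun e => `|block_corr e| ^+ 2).

(* Bessel's inequality for the
   orthogonal pair corr_vec, id_block only needs orthogonality of the lam's, not that
   together with the identity they span all operators. *)
Definition corr_vec (z : pcfg) : C := \sum_e (block_corr e / ce) * lam_block e z.

Lemma dot_corr_vec_proj : dot corr_vec proj_entry = cp * block_corr_sq.
Proof.
rewrite dot_suml /block_corr_sq /local_sum mulr_suml mulr_sumr.
apply: eq_bigr => e _.
rewrite dot_lam_block_proj rmorphM /= fmorphV /= conjC_nat normCK; ring.
Qed.

Lemma dot_lam_block_corr_vec e :
  dot (lam_block e) corr_vec = cp * (d%:R ^+ #|B| * block_corr e).
Proof.
rewrite dot_sumr.
under eq_bigr do rewrite dot_lam_block.
have -> : \sum_(e' : index)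
    block_corr e' / ce * (cp * (d%:R ^+ #|B| * \prod_(j in B) (e j == e' j)%:R)) =
    cp * d%:R ^+ #|B| / ce * \sum_(e' : index) \prod_(j in B) (e j == e' j)%:R * block_corr e'.
  by rewrite mulr_sumr; apply: eq_bigr => e' _; ring.
rewrite (sum_local_sum indices_gt0 B) (local_sum_delta indices_gt0 e block_corr_local).
by field.
Qed.

Lemma dot_corr_vec : dot corr_vec corr_vec = d%:R ^+ #|B| * (cp * block_corr_sq).
Proof.
rewrite dot_suml /block_corr_sq /local_sum mulr_suml !mulr_sumr.
apply: eq_bigr => e _.
rewrite dot_lam_block_corr_vec rmorphM /= fmorphV /= conjC_nat normCK; ring.
Qed.

Lemma dot_corr_vec_id : B != set0 -> dot corr_vec id_block = 0.
Proof.
move=> B_neq0; rewrite dot_suml big1 // => e _.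
by rewrite dotC dot_id_lam_block // rmorph0 mulr0.
Qed.

Lemma block_corr_sq_le : B != set0 ->
  block_corr_sq <= (d%:R ^+ #|B| - 1) * block_norm ^+ 2.
Proof.
move=> B_neq0.
have cp_gt0 : 0 < cp by rewrite ltr0n expn_gt0 pairs_gt0.
have dB_gt0 : 0 < d%:R ^+ #|B| :> C by rewrite exprn_gt0 // ltr0n; lia.
have N_ge0 : 0 <= block_norm by rewrite /block_norm local_sum_ge0 // => x; rewrite exprn_ge0.
have S_ge0 : 0 <= cp * block_corr_sq.
  by apply: mulr_ge0; [exact: ltW | apply: local_sum_ge0 => e; rewrite exprn_ge0].
have := dot_bessel dB_gt0 (mulr_gt0 cp_gt0 dB_gt0) S_ge0 dot_corr_vec_proj
  dot_corr_vec (dot_corr_vec_id B_neq0) dot_id_block.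
rewrite dot_proj dot_id_proj normrM (ger0_norm (ltW cp_gt0)) (ger0_norm N_ge0).
have -> : d%:R ^+ #|B| * (cp * block_norm ^+ 2 - (cp * block_norm) ^+ 2 / (cp * d%:R ^+ #|B|))
          = cp * ((d%:R ^+ #|B| - 1) * block_norm ^+ 2).
  by field; rewrite !gt_eqF.
by rewrite ler_pM2l.
Qed.

End BlockCorrelation.

Section Correlations.
Variables (C : numClosedFieldType) (n d : nat) (lam : 'I_(d ^ 2 - 1) -> 'M[C]_d).
Hypothesis lam_basis : gellmann_basis lam.

Local Notation index := {ffun 'I_n -> 'I_(d ^ 2 - 1)}.

Definition corr (rho : qop C n d) (e : index) : C :=
  trprod rho (tensop (fun j => lam (e j))).

Lemma corr_real rho e : (forall x y, rho y x = (rho x y)^*) -> corr rho e \is Num.real.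
Proof.
move=> rho_herm; rewrite CrealE; apply/eqP.
rewrite /corr /trprod /tensop rmorph_sum exchange_big /=.
apply: eq_bigr => y _; rewrite rmorph_sum; apply: eq_bigr => x _ /=.
rewrite rmorphM rmorph_prod /= -rho_herm.
by congr (_ * _); apply: eq_bigr => j _; rewrite -(lam_adj lam_basis).
Qed.

Lemma pure_herm (psi : config n d -> C) (sigma : qop C n d) :
  (forall x y, sigma x y = psi x * (psi y)^*) -> forall x y, sigma y x = (sigma x y)^*.
Proof. by move=> sigma_def x y; rewrite !sigma_def rmorphM /= conjCK mulrC. Qed.

Hypothesis d_gt1 : (1 < d)%N.
Variables (P : {set {set 'I_n}}) (phi : {set 'I_n} -> config n d -> C) (psi : config n d -> C)
  (sigma : qop C n d).
Hypothesis P_partition : partition P [set: 'I_n].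
Hypothesis phi_local : forall B, B \in P -> local_on B (phi B).
Hypothesis psi_prod : forall x, psi x = \prod_(B in P) phi B x.
Hypothesis psi_norm : \sum_x `|psi x| ^+ 2 = 1.
Hypothesis sigma_pure : forall x y, sigma x y = psi x * (psi y)^*.

Lemma prod_partition (F : 'I_n -> C) : \prod_j F j = \prod_(B in P) \prod_(j in B) F j.
Proof.
case/and3P: P_partition => /eqP coverP disjP _.
by rewrite -(@big_trivIset _ _ 1 *%R P F disjP) coverP; apply: eq_bigl => j; rewrite inE.
Qed.

Lemma corr_product_state e : corr sigma e = \prod_(B in P) block_corr lam B (phi B) e.
Proof.
rewrite (local_sum_partition _ P_partition); first last.
- by move=> B /phi_local phiB; apply: (corr_term_local lam phiB).
- exact: pairs_gt0.
rewrite /corr /trprod /tensop.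
under eq_bigr do under eq_bigr do rewrite sigma_pure.
rewrite (sum_pair_cfg (fun x y => psi x * (psi y)^* * \prod_j lam (e j) (y j) (x j))).
apply: eq_bigr => z _.
rewrite !psi_prod rmorph_prod prod_partition -!big_split /=; apply: eq_bigr => B _.
rewrite /proj_entry /lam_block rmorph_prod mulrC !mulrA; congr (_ * _ * _).
by apply: eq_bigr => j _; rewrite !ffunE (lam_adj lam_basis).
Qed.

Lemma prod_block_norm : \prod_(B in P) block_norm B (phi B) = 1.
Proof.
rewrite (local_sum_partition _ P_partition); first last.
- by move=> B /phi_local phiB x y xy; rewrite (phiB x y xy).
- exact: digits_gt0.
rewrite -[RHS]psi_norm; apply: eq_bigr => x _ /=.
by rewrite psi_prod normr_prod prodrXl.
Qed.

Lemma corr_product_state_sq_le :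
  \sum_e corr sigma e ^+ 2 <= (\prod_(B in P) (d ^ #|B| - 1))%:R.
Proof.
have corr_sq e : corr sigma e ^+ 2 = \prod_(B in P) `|block_corr lam B (phi B) e| ^+ 2.
  rewrite expr2 -{2}(conj_Creal (corr_real e (pure_herm sigma_pure))) -normCK.
  by rewrite corr_product_state normr_prod prodrXl.
have blocks_ne0 B : B \in P -> B != set0.
  by case/and3P: P_partition => _ _ P_ne0 BP; apply: contraNneq P_ne0 => <-.
rewrite (eq_bigr _ (fun e _ => corr_sq e)) -(local_sum_partition _ P_partition); first last.
- by move=> B _ e e' ee'; rewrite (block_corr_local lam (phi B) ee').
- exact: indices_gt0.
have -> : (\prod_(B in P) (d ^ #|B| - 1))%:R =
          \prod_(B in P) ((d%:R ^+ #|B| - 1) * block_norm B (phi B) ^+ 2) :> C.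
  rewrite big_split /= prodrXl prod_block_norm expr1n mulr1 natr_prod.
  by apply: eq_bigr => B _; rewrite natrB ?natrX // expn_gt0; lia.
apply: ler_prod => B BP.
rewrite (block_corr_sq_le lam_basis d_gt1 (phi_local BP) (blocks_ne0 B BP)) andbT.
by apply: local_sum_ge0 => e; rewrite exprn_ge0.
Qed.

End Correlations.

Lemma sqr_sum_convex (R : numDomainType) (I : finType) (p T : I -> R) :
  (forall i, 0 <= p i) -> \sum_i p i = 1 -> (forall i, T i \is Num.real) ->
  (\sum_i p i * T i) ^+ 2 <= \sum_i p i * T i ^+ 2.
Proof.
move=> p_ge0 p_sum1 T_real.
set mu := \sum_i p i * T i.
have variance_ge0 : 0 <= \sum_i p i * (T i - mu) ^+ 2.
  apply: sumr_ge0 => i _; apply: mulr_ge0 => //; rewrite -realEsqr rpredB //.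
  by apply: rpred_sum => j _; apply: realM; [exact: ger0_real | exact: T_real].
have variance_eq : \sum_i p i * (T i - mu) ^+ 2 = \sum_i p i * T i ^+ 2 - mu ^+ 2.
  transitivity (\sum_i (p i * T i ^+ 2 - (mu *+ 2) * (p i * T i) + mu ^+ 2 * p i)).
    by apply: eq_bigr => i _; ring.
  by rewrite big_split sumrB /= -!mulr_sumr p_sum1 -/mu; ring.
by rewrite -subr_ge0 -variance_eq.
Qed.

Section Mixtures.
Variables (C : numClosedFieldType) (n d : nat) (lam : 'I_(d ^ 2 - 1) -> 'M[C]_d).
Hypothesis lam_basis : gellmann_basis lam.

Lemma corr_mix m (p : 'I_m -> C) (sigma : 'I_m -> qop C n d) rho e :
  (forall x y, rho x y = \sum_i p i * sigma i x y) ->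
  corr lam rho e = \sum_i p i * corr lam (sigma i) e.
Proof.
move=> rho_mix; rewrite /corr /trprod.
under eq_bigr do under eq_bigr do rewrite rho_mix mulr_suml.
under eq_bigr do rewrite exchange_big.
rewrite exchange_big; apply: eq_bigr => i _.
rewrite mulr_sumr; apply: eq_bigr => x _; rewrite mulr_sumr.
by apply: eq_bigr => y _; rewrite mulrA.
Qed.

Lemma corr_sq_mix_le m (p : 'I_m -> C) (sigma : 'I_m -> qop C n d) rho (M : C) :
  (forall i, 0 <= p i) -> \sum_i p i = 1 ->
  (forall x y, rho x y = \sum_i p i * sigma i x y) ->
  (forall i e, corr lam (sigma i) e \is Num.real) ->
  (forall i, \sum_e corr lam (sigma i) e ^+ 2 <= M) ->
  \sum_e corr lam rho e ^+ 2 <= M.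
Proof.
move=> p_ge0 p_sum1 rho_mix corr_real bound.
under eq_bigr do rewrite (corr_mix _ rho_mix).
apply: le_trans (ler_sum _ (fun e _ => sqr_sum_convex p_ge0 p_sum1 (corr_real^~ e))) _.
rewrite exchange_big /= -[M]mul1r -p_sum1 mulr_suml.
by apply: ler_sum => i _; rewrite -mulr_sumr ler_wpM2l.
Qed.

Hypothesis d_gt1 : (1 < d)%N.

Lemma k_sep_pure_corr_sq_le k (sigma : qop C n d) : (0 < k <= n)%N -> k_sep_pure k sigma ->
  \sum_e corr lam sigma e ^+ 2 <=
  ((d ^ ceil_div n k - 1) ^ (n %% k) * (d ^ (n %/ k) - 1) ^ (k - n %% k))%:R.
Proof.
move=> k_range [psi [psi_norm [P [P_part P_card [phi [phi_local psi_prod]]]] sigma_pure]].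
apply: le_trans (corr_product_state_sq_le lam_basis d_gt1 P_part phi_local psi_prod
  psi_norm sigma_pure) _.
rewrite ler_nat -big_enum.
rewrite -(big_map (fun B : {set 'I_n} => #|B|) predT (fun b => (d ^ b - 1)%N)).
apply: prod_subn1_expn_balanced => //.
- by rewrite sumnE big_map big_enum -(card_partition P_part) cardsT card_ord.
- by rewrite size_map -cardE P_card.
Qed.

End Mixtures.

Theorem mainTheorem6 (C : numClosedFieldType) (n d k : nat)
    (lam : 'I_(d ^ 2 - 1) -> 'M[C]_d) (rho : qop C n d) :
  (1 <= n)%N -> (2 <= d)%N -> (1 <= k)%N -> (k <= n)%N ->
  gellmann_basis lam ->
  k_separable k rho ->
  let R := (n - k * (n %/ k))%N in
  tau_norm lam rho <=
    sqrtC (((d ^ ceil_div n k - 1) ^ R * (d ^ (n %/ k) - 1) ^ (k - R))%N)%:R.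
Proof.
move=> _ d_gt1 k_gt0 le_kn lam_basis [m [p [sigma [p_ge0 p_sum1 sigma_pure rho_mix]]]].
rewrite /=.
have -> : (n - k * (n %/ k))%N = (n %% k)%N by rewrite {1}(divn_eq n k) mulnC addKn.
have corr_sigma_real i e : corr lam (sigma i) e \is Num.real.
  by case: (sigma_pure i) => psi [_ _ /pure_herm]; apply: corr_real.
have corr_rho_real e : corr lam rho e \is Num.real.
  rewrite (corr_mix lam _ rho_mix); apply: rpred_sum => i _.
  by apply: realM; [apply: ger0_real | apply: corr_sigma_real].
rewrite (_ : tau_norm lam rho = sqrtC (\sum_e corr lam rho e ^+ 2)) //.
rewrite ler_sqrtC ?nnegrE ?ler0n //; last by apply: sumr_ge0 => e _; rewrite -realEsqr.
apply: (corr_sq_mix_le p_ge0 p_sum1 rho_mix corr_sigma_real) => i.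
by apply: k_sep_pure_corr_sq_le; rewrite ?k_gt0.
Qed.
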